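(* Let $\mathcal H=(\mathcal V,\mathcal E)$ be a (finite) higraph with path DGA $(\mathcal A,\delta)$, and let $D=\sum_{\varepsilon\in\mathcal E}\varepsilon\in\mathcal A$ be the sum of all paths of length $1$. Then $\delta D=D\,D$.
   Context: $\mathbb F=\{0,1\}$. A directed hypergraph $\mathcal H=(\mathcal V,\mathcal E)$ has edges $\varepsilon=(I,J)\in2^{\mathcal V}\times2^{\mathcal V}$, source $I$, target $J$. It is a higraph if for all edges $\varepsilon,\varepsilon'$: (Transitive) if $t(\varepsilon)\cap s(\varepsilon')\ne\emptyset$ then it equals $\{K\}$ for one vertex $K$, the unions $s(\varepsilon)\cup(s(\varepsilon')\setminus\{K\})$ and $(t(\varepsilon)\setminus\{K\})\cup t(\varepsilon')$ are disjoint unions and their pair is an edge; (Acyclic) if $t(\varepsilon)\cap s(\varepsilon')$ and $t(\varepsilon')\cap s(\varepsilon)$ are both non-empty then $\varepsilon=\varepsilon'=(\{K\},\{K\})$. $\mathcal V$ is finite. A path is a non-empty finite directed tree $T=(V,E)$ (nodes, arrows) with $\rho:V\to\mathcal E$ such that for each arrow $e$, $t(\rho(s(e)))\cap s(\rho(t(e)))$ is a single vertex $\rho(e)$, and distinct arrows with common source node or common target node have distinct $\rho(e)$; label-compatible tree isomorphisms identify paths. A single edge is a path of length $1$ (length = number of nodes). Source $s(\rho)=\bigcup_v(s(\rho(v))\setminus\{\rho(e):t(e)=v\})$, target $t(\rho)=\bigcup_v(t(\rho(v))\setminus\{\rho(e):s(e)=v\})$; a vertex of $s(\rho)$ in $s(\rho(v))$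 is sourced by $v$, of $t(\rho)$ in $t(\rho(v))$ targeted by $v$. Refinement $r((\rho,v),\rho'')$ for a node $v$ and a path $\rho''$ with the same source and target as $\rho(v)$: replace $v$ by the tree of $\rho''$, each arrow $(a,v)$ by $(a,v'')$ with $v''$ sourcing $\rho((a,v))$, each arrow $(v,b)$ by $(v'',b)$ with $v''$ targeting $\rho((v,b))$; $0$ otherwise. Path DGA: $\mathcal A$ the $\mathbb F$-vector space on paths, graded by length; product $\rho_1\rho_2$: if $t(\rho_1)\cap s(\rho_2)=\{K\}$, with $K$ targeted by node $v_1$ of $\rho_1$ and sourced by node $v_2$ of $\rho_2$, the path on the disjoint union of the trees plus the arrow $(v_1,v_2)$; $0$ if the intersection is empty; extended bilinearly. $\delta\rho=\sum_{v}\sum_{\rho''\text{ of length }2}r((\rho,v),\rho'')$, extended linearly. *)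

From HB Require Import structures.
From mathcomp Require Import all_boot.

Unset Printing Implicit Defensive.

Section Higraph.

Context {V : finType}.

Definition hedge := ({set V} * {set V})%type.
Definition hsrc (e : hedge) : {set V} := e.1.
Definition htgt (e : hedge) : {set V} := e.2.

Definition is_higraph (E : {set hedge}) : Prop :=
  (forall e e', e \in E -> e' \in E -> htgt e :&: hsrc e' != set0 ->
     exists K : V,
       [/\ htgt e :&: hsrc e' = [set K],
           [disjoint hsrc e & hsrc e' :\ K],
           [disjoint htgt e :\ K & htgt e'] &
           (hsrc e :|: (hsrc e' :\ K), (htgt e :\ K) :|: htgt e') \in E])
  /\
  (forall e e', e \in E -> e' \in E ->
     htgt e :&: hsrc e' != set0 -> htgt e' :&: hsrc e != set0 ->
     exists K : V, e = ([set K], [set K]) /\ e' = ([set K], [set K])).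

(** Concrete (pre)paths: a labelled directed graph on nodes 'I_csize.
    The arrow label rho(e) is the unique vertex of arrow_set. *)
Record cpath := CPath {
  csize : nat;
  clab : 'I_csize -> hedge;
  carr : {set 'I_csize * 'I_csize}
}.

Definition arrow_set (p : cpath) (a b : 'I_(csize p)) : {set V} :=
  htgt (clab p a) :&: hsrc (clab p b).

Definition in_verts (p : cpath) (w : 'I_(csize p)) : {set V} :=
  \bigcup_(u | (u, w) \in carr p) arrow_set p u w.
Definition out_verts (p : cpath) (w : 'I_(csize p)) : {set V} :=
  \bigcup_(u | (w, u) \in carr p) arrow_set p w u.

Definition psrc (p : cpath) : {set V} :=
  \bigcup_(w : 'I_(csize p)) (hsrc (clab p w) :\: in_verts p w).
Definition ptgt (p : cpath) : {set V} :=
  \bigcup_(w : 'I_(csize p)) (htgt (clab p w) :\: out_verts p w).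

Definition und_rel (p : cpath) : rel 'I_(csize p) :=
  fun i j => ((i, j) \in carr p) || ((j, i) \in carr p).

(** p is a path of the higraph with edge set E: nonempty finite directed
    tree (connected, #nodes - 1 arrows), labels in E, each arrow labelled by
    a single vertex, and distinct arrows with common source (resp. target)
    have distinct labels. *)
Definition is_path (E : {set hedge}) (p : cpath) : bool :=
  [&& 0 < csize p,
      [forall w, clab p w \in E],
      #|carr p| == (csize p).-1,
      [forall i, forall j, connect (und_rel p) i j],
      [forall x in carr p, #|arrow_set p x.1 x.2| == 1],
      [forall i, forall j, forall j',
          [&& (i, j) \in carr p, (i, j') \in carr p & j != j'] ==>
          (arrow_set p i j != arrow_set p i j')] &
      [forall i, forall i', forall j,
          [&& (i, j) \in carr p, (i', j) \in carr p & i != i'] ==>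
          (arrow_set p i j != arrow_set p i' j)]].

Definition iso (p q : cpath) : bool :=
  (csize p == csize q) &&
  [exists f : {ffun 'I_(csize p) -> 'I_(csize q)},
    [&& injectiveb f,
        [forall i, clab q (f i) == clab p i] &
        [forall i, forall j, ((i, j) \in carr p) == ((f i, f j) \in carr q)]]].

Definition pack {T : finType} (lab : T -> hedge) (arr : {set T * T}) : cpath :=
  @CPath #|T| (fun i => lab (enum_val i))
    [set x : 'I_#|T| * 'I_#|T| | (enum_val x.1, enum_val x.2) \in arr].

Definition refine_nodes (p : cpath) (v : 'I_(csize p)) (q : cpath) :=
  ({i : 'I_(csize p) | i != v} + 'I_(csize q))%type.

Definition refine_lab (p : cpath) (v : 'I_(csize p)) (q : cpath)
  (x : refine_nodes p v q) : hedge :=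
  match x with inl i => clab p (val i) | inr j => clab q j end.

Definition refine_arr (p : cpath) (v : 'I_(csize p)) (q : cpath)
  : {set refine_nodes p v q * refine_nodes p v q} :=
  [set x : refine_nodes p v q * refine_nodes p v q |
    match x with
    | (inl a, inl b) => (val a, val b) \in carr p
    | (inl a, inr j) => ((val a, v) \in carr p) &&
        [exists K in arrow_set p (val a) v,
           (K \in psrc q) && (K \in hsrc (clab q j))]
    | (inr j, inl b) => ((v, val b) \in carr p) &&
        [exists K in arrow_set p v (val b),
           (K \in ptgt q) && (K \in htgt (clab q j))]
    | (inr j, inr j') => (j, j') \in carr q
    end].

(** None stands for 0 *)
Definition refine (p : cpath) (v : 'I_(csize p)) (q : cpath) : option cpath :=
  if (hsrc (clab p v) == psrc q) && (htgt (clab p v) == ptgt q)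
  then Some (pack (refine_lab p v q) (refine_arr p v q))
  else None.

(** path of length 1 (a single edge) and canonical representatives of the
    isomorphism classes of paths of length 2 (arrow 0 -> 1) *)
Definition mk1 (e : hedge) : cpath := @CPath 1 (fun _ => e) set0.
Definition mk2 (e1 e2 : hedge) : cpath :=
  @CPath 2 (fun i => if i == ord0 then e1 else e2) [set (ord0, ord_max)].

Definition len2_paths (E : {set hedge}) : seq cpath :=
  [seq q <- [seq mk2 e1 e2 | e1 <- enum E, e2 <- enum E] | is_path E q].

(** Product of two paths (None stands for 0). *)
Definition mul_arr (p1 p2 : cpath)
  : {set ('I_(csize p1) + 'I_(csize p2)) * ('I_(csize p1) + 'I_(csize p2))} :=
  [set x | match x with
    | (inl a, inl b) => (a, b) \in carr p1
    | (inr a, inr b) => (a, b) \in carr p2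
    | (inl a, inr b) => [exists K, [&& ptgt p1 :&: psrc p2 == [set K],
                                       K \in htgt (clab p1 a) &
                                       K \in hsrc (clab p2 b)]]
    | (inr _, inl _) => false
    end].

Definition mul_lab (p1 p2 : cpath) (x : 'I_(csize p1) + 'I_(csize p2)) : hedge :=
  match x with inl a => clab p1 a | inr b => clab p2 b end.

Definition mul (p1 p2 : cpath) : option cpath :=
  if [exists K, ptgt p1 :&: psrc p2 == [set K]]
  then Some (pack (mul_lab p1 p2) (mul_arr p1 p2))
  else None.

(** Elements of the path algebra A over F = {0,1}: formal sums (sequences)
    of paths; two formal sums are equal in A iff every isomorphism class of
    paths occurs with the same parity. *)
Definition alg := seq cpath.

Definition Aeq (x y : alg) : Prop :=
  forall p : cpath, odd (count (iso p) x) = odd (count (iso p) y).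

Definition delta (E : {set hedge}) (p : cpath) : alg :=
  flatten [seq pmap (refine p v) (len2_paths E) | v <- enum 'I_(csize p)].

Definition deltaA (E : {set hedge}) (x : alg) : alg := flatten (map (delta E) x).

Definition mulA (x y : alg) : alg :=
  flatten [seq pmap (mul p1) y | p1 <- x].

Definition Dsum (E : {set hedge}) : alg := [seq mk1 e | e <- enum E].

End Higraph.

From Pilot Require Import Defs.
From mathcomp Require Import all_boot.

Set Implicit Arguments.
Unset Strict Implicit.
Unset Printing Implicit Defensive.

(* Refining a single edge e at its only node turns e into any path q whose
   boundary (psrc q, ptgt q) is e, so delta D counts every path of length 2
   once for each edge equal to its boundary; by transitivity of the higraph
   there is exactly one such edge, and delta D is the sum of all paths of
   length 2.  On the other side, the product of two edges e1 e2 is the path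
   e1 -> e2, and it is non-zero exactly when t(e1) and s(e2) meet in a single
   vertex, i.e. exactly when e1 -> e2 is a path.  Both sides thus agree even
   as multisets, not only modulo 2. *)

Section PathIsomorphism.

Variable V : finType.
Implicit Types p q r : @cpath V.

Lemma iso_trans p q r : iso p q -> iso q r -> iso p r.
Proof.
case/andP=> /eqP e1 /existsP[f /and3P[/injectiveP fi /forallP fl /forallP fa]].
case/andP=> /eqP e2 /existsP[g /and3P[/injectiveP gi /forallP gl /forallP ga]].
apply/andP; split; first by rewrite e1 e2.
apply/existsP; exists [ffun i => g (f i)]; apply/and3P; split.
- by apply/injectiveP => i j; rewrite !ffunE => /gi /fi.
- by apply/forallP => i; rewrite ffunE (eqP (gl _)) fl.
- apply/forallP => i; apply/forallP => j; rewrite !ffunE.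
  by move/forallP: (fa i) => /(_ j) /eqP ->; move/forallP: (ga (f i)) => /(_ (f j)).
Qed.

Lemma iso_sym p q : iso p q -> iso q p.
Proof.
case/andP=> /eqP e1 /existsP[f /and3P[/injectiveP fi /forallP fl /forallP fa]].
have [g fg gf] : bijective f by apply: inj_card_bij => //; rewrite !card_ord e1.
apply/andP; split; first by rewrite e1.
apply/existsP; exists [ffun i => g i]; apply/and3P; split.
- by apply/injectiveP => i j; rewrite !ffunE => /(congr1 f); rewrite !gf.
- by apply/forallP => i; rewrite ffunE -{2}(gf i) eq_sym.
- apply/forallP => i; apply/forallP => j; rewrite !ffunE.
  by move/forallP: (fa (g i)) => /(_ (g j)); rewrite !gf eq_sym.
Qed.

Lemma iso_transr p q r : iso q r -> iso p q = iso p r.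
Proof.
move=> iso_qr; apply/idP/idP => iso_p; first exact: iso_trans iso_p iso_qr.
exact: iso_trans iso_p (iso_sym iso_qr).
Qed.

Lemma pack_iso (T : finType) (lab : T -> hedge) (arr : {set T * T}) q
    (h : T -> 'I_(csize q)) :
  injective h -> #|T| = csize q -> (forall x, lab x = clab q (h x)) ->
  (forall x y, ((x, y) \in arr) = ((h x, h y) \in carr q)) ->
  iso (pack lab arr) q.
Proof.
move=> h_inj cardT h_lab h_arr; apply/andP; split; first by rewrite /= cardT.
apply/existsP; exists [ffun i => h (enum_val i)]; apply/and3P; split.
- by apply/injectiveP => i j; rewrite !ffunE => /h_inj /enum_val_inj.
- by apply/forallP => i; rewrite ffunE /= h_lab.
- by apply/forallP => i; apply/forallP => j; rewrite !ffunE inE /= h_arr.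
Qed.

End PathIsomorphism.

Section ShortPaths.

Variable V : finType.
Implicit Types (e : @hedge V) (E : {set @hedge V}) (p q : @cpath V).

Definition boundary q : hedge := (psrc q, ptgt q).

Definition composable e1 e2 : bool := #|htgt e1 :&: hsrc e2| == 1.

Lemma psrc_mk1 e : psrc (mk1 e) = hsrc e.
Proof. by rewrite /psrc big_ord1 /in_verts big_pred0 ?setD0 // => u; rewrite inE. Qed.

Lemma ptgt_mk1 e : ptgt (mk1 e) = htgt e.
Proof. by rewrite /ptgt big_ord1 /out_verts big_pred0 ?setD0 // => u; rewrite inE. Qed.

Lemma psrc_mk2 e1 e2 :
  psrc (mk2 e1 e2) = hsrc e1 :|: (hsrc e2 :\: (htgt e1 :&: hsrc e2)).
Proof.
rewrite /psrc big_ord_recl big_ord_recl big_ord0 setU0 /in_verts.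
rewrite big_pred0; last by move=> u; rewrite !inE xpair_eqE andbF.
by rewrite (big_pred1 ord0) ?setD0 // => u; rewrite !inE xpair_eqE andbT.
Qed.

Lemma ptgt_mk2 e1 e2 :
  ptgt (mk2 e1 e2) = (htgt e1 :\: (htgt e1 :&: hsrc e2)) :|: htgt e2.
Proof.
rewrite /ptgt big_ord_recl big_ord_recl big_ord0 setU0 /out_verts.
rewrite (big_pred1 ord_max); last by move=> u; rewrite !inE xpair_eqE eqxx.
by rewrite big_pred0 ?setD0 // => u; rewrite !inE xpair_eqE.
Qed.

Lemma is_path_mk2 E e1 e2 : e1 \in E -> e2 \in E ->
  is_path E (mk2 e1 e2) = composable e1 e2.
Proof.
move=> e1E e2E; rewrite /is_path /= cards1 /=.
have -> : [forall w, clab (mk2 e1 e2) w \in E].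
  by apply/forallP => w /=; case: (w == ord0).
have -> : [forall i, forall j, connect (und_rel (mk2 e1 e2)) i j].
  apply/forallP => i; apply/forallP => j.
  have [-> | ne_ij] := eqVneq i j; first exact: connect0.
  apply: connect1; move: ne_ij; rewrite /und_rel !inE !xpair_eqE.
  by case: i => [[|[|i]] //= ?]; case: j => [[|[|j]] //= ?].
have -> : [forall i, forall j, forall j',
    [&& (i, j) \in carr (mk2 e1 e2), (i, j') \in carr (mk2 e1 e2) & j != j'] ==>
    (arrow_set (mk2 e1 e2) i j != arrow_set (mk2 e1 e2) i j')].
  apply/forallP => i; apply/forallP => j; apply/forallP => j'; apply/implyP.
  by rewrite !inE !xpair_eqE => /and3P[/andP[_ /eqP->] /andP[_ /eqP->]]; rewrite eqxx.
have -> : [forall i, forall i', forall j,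
    [&& (i, j) \in carr (mk2 e1 e2), (i', j) \in carr (mk2 e1 e2) & i != i'] ==>
    (arrow_set (mk2 e1 e2) i j != arrow_set (mk2 e1 e2) i' j)].
  apply/forallP => i; apply/forallP => i'; apply/forallP => j; apply/implyP.
  by rewrite !inE !xpair_eqE => /and3P[/andP[/eqP-> _] /andP[/eqP-> _]]; rewrite eqxx.
rewrite !andbT; apply/forall_inP/idP => [arrow1 | comp_e x].
  by have := arrow1 (ord0, ord_max); rewrite inE eqxx => /(_ isT).
by rewrite inE => /eqP->.
Qed.

Lemma iso_mul_mk1 p e1 e2 :
  oapp (iso p) false (Defs.mul (mk1 e1) (mk1 e2))
  = composable e1 e2 && iso p (mk2 e1 e2).
Proof.
rewrite /Defs.mul ptgt_mk1 psrc_mk1 /composable.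
have [/existsP[K /eqP e12K] | no_K] := boolP [exists K, htgt e1 :&: hsrc e2 == [set K]].
  rewrite e12K cards1 /=; apply: iso_transr.
  pose h (x : 'I_1 + 'I_1) : 'I_2 := if x is inl _ then ord0 else ord_max.
  apply: (@pack_iso V _ _ _ (mk2 e1 e2) h).
  - by case=> a [] b //=; rewrite !ord1.
  - by rewrite card_sum card_ord.
  - by case.
  - case=> a [] b; rewrite !inE //= ptgt_mk1 psrc_mk1 e12K.
    by apply/existsP; exists K; rewrite eqxx /= -in_setI e12K set11.
case: (#|_| =P 1) => // /eqP /cards1P[K e12K].
by case/existsP: no_K; exists K; rewrite e12K.
Qed.

Lemma iso_refine_mk1 p e (v : 'I_1) q :
  oapp (iso p) false (refine (mk1 e) v q) = (e == boundary q) && iso p q.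
Proof.
rewrite /refine /= -xpair_eqE -surjective_pairing.
case: (e == boundary q) => //=; apply: iso_transr.
have no_old_node : {i : 'I_(csize (mk1 e)) | i != v} -> False.
  by case=> i /=; rewrite !ord1 eqxx.
pose h (x : refine_nodes (mk1 e) v q) : 'I_(csize q) :=
  match x with inl i => match no_old_node i with end | inr j => j end.
apply: (@pack_iso V _ _ _ q h).
- by case=> [a|a]; [case: (no_old_node a) | case=> [b|b] //= ->].
- rewrite card_sum card_sig card_ord /=.
  suff -> : #|[pred x : 'I_1 | x != v]| = 0 by [].
  by apply: eq_card0 => i; rewrite !inE /= !ord1 eqxx.
- by case=> [a|a] //; case: (no_old_node a).
- case=> [a|a]; first by case: (no_old_node a).
  by case=> [b|b]; [case: (no_old_node b) | rewrite inE].
Qed.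

Lemma boundary_len2_paths E : is_higraph E ->
  all (fun q => boundary q \in E) (len2_paths E).
Proof.
case=> trans _; rewrite all_filter; apply/all_allpairsP => e1 e2.
rewrite !mem_enum => e1E e2E; apply/implyP; rewrite is_path_mk2 // => /cards1P[K e12K].
have [|K' [e12K' _ _]] := trans e1 e2 e1E e2E.
  by rewrite e12K; apply/set0Pn; exists K; rewrite set11.
by rewrite /boundary psrc_mk2 ptgt_mk2 e12K'.
Qed.

End ShortPaths.

Lemma count_pmap (T U : Type) (f : T -> option U) (a : pred U) s :
  count a (pmap f s) = count (fun x => oapp a false (f x)) s.
Proof. by elim: s => [|x s IH] //=; case: (f x) => [y|] //=; rewrite IH. Qed.

Lemma sumn_count_fibers (T : finType) (A : {pred T}) (U : Type) (t : seq U)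
    (f : U -> T) (a : pred U) :
  all (fun y => a y ==> (f y \in A)) t ->
  sumn [seq count (fun y => (x == f y) && a y) t | x <- enum A] = count a t.
Proof.
have count_sum (W : Type) (b : pred W) s : count b s = \sum_(w <- s) b w.
  by rewrite -sum1_count big_mkcond.
rewrite sumnE big_map; under eq_bigr do rewrite count_sum.
rewrite exchange_big count_sum; elim: t => [|y t IH] /=; first by rewrite !big_nil.
case/andP=> /implyP fA /IH{}IH; rewrite !big_cons IH; congr (_ + _).
have [ay | _] := boolP (a y); last by rewrite big1 // => x _; rewrite andbF.
under eq_bigr do rewrite andbT.
by rewrite -count_sum count_uniq_mem ?enum_uniq // mem_enum fA.
Qed.

Section Counting.

Variables (V : finType) (E : {set @hedge V}) (p : @cpath V).

Lemma count_delta_mk1 e :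
  count (iso p) (delta E (mk1 e))
  = count (fun q => (e == boundary q) && iso p q) (len2_paths E).
Proof.
rewrite /delta /= enum_ordSl enum_ord0 /= cats0 count_pmap.
by apply: eq_count => q; rewrite iso_refine_mk1.
Qed.

Lemma count_mulA_Dsum :
  count (iso p) (mulA (Dsum E) (Dsum E)) = count (iso p) (len2_paths E).
Proof.
rewrite /mulA /len2_paths count_filter !count_flatten /Dsum -!map_comp.
congr sumn; apply/eq_in_map => e1; rewrite mem_enum => e1E /=.
rewrite count_pmap !count_map; apply: eq_in_count => e2; rewrite mem_enum => e2E.
by rewrite /= iso_mul_mk1 is_path_mk2 // andbC.
Qed.

Lemma count_deltaA_Dsum : is_higraph E ->
  count (iso p) (deltaA E (Dsum E)) = count (iso p) (len2_paths E).
Proof.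
move=> hE; rewrite /deltaA /Dsum count_flatten -!map_comp.
rewrite (eq_map (fun e => count_delta_mk1 e)) sumn_count_fibers //.
by apply: sub_all (boundary_len2_paths hE) => q q_bd; apply/implyP.
Qed.

End Counting.

Theorem proposition2p17 (V : finType) (E : {set (@hedge V)}) :
  is_higraph E -> Aeq (deltaA E (Dsum E)) (mulA (Dsum E) (Dsum E)).
Proof.
by move=> hE p; rewrite count_deltaA_Dsum // count_mulA_Dsum.
Qed.
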